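(* Let $G$ be a sparsifiable graph and $H$ a graph of minimum degree at least $3$. If $G$ contains $H$ as a minor, then $G$ contains $H$ as an induced minor.
   Context: Graphs are finite and simple. A vertex $v$ of a graph is sparsifiable if (1) $v$ has degree at most $2$, or (2) $v$ has degree $3$ and all of its neighbors have degree at most $2$, or (3) $v$ has degree $3$, one of its neighbors has degree at most $2$, and the two other neighbors form a triangle with $v$. A graph is sparsifiable if every vertex of it is sparsifiable. A minor model of $H$ in $G$ is a family of pairwise disjoint sets $X_v\subseteq V(G)$, $v\in V(H)$, each inducing a connected subgraph, such that for every edge $uv\in E(H)$ there is an edge of $G$ between $X_u$ and $X_v$; it is an induced minor model if moreover for distinct non-adjacent $u,v\in V(H)$ there is no edge between $X_u$ and $X_v$. $G$ contains $H$ as a (induced) minor iff there is a (induced) minor model of $H$ in $G$. *)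

From mathcomp Require Import all_boot.
Set Implicit Arguments. Unset Strict Implicit. Unset Printing Implicit Defensive.

Definition simple_graph (T : finType) (e : rel T) : Prop :=
  symmetric e /\ irreflexive e.

Definition nbhd (T : finType) (e : rel T) (v : T) : {set T} := [set u | e v u].
Definition deg (T : finType) (e : rel T) (v : T) : nat := #|nbhd e v|.

Definition sparsifiable_vertex (T : finType) (e : rel T) (v : T) : Prop :=
  deg e v <= 2
  \/ (deg e v = 3 /\ forall u, e v u -> deg e u <= 2)
  \/ (deg e v = 3 /\ exists u w z,
        [/\ nbhd e v = [set u; w; z], u != w, u != z, w != z &
            deg e u <= 2 /\ e w z]).

Definition sparsifiable (T : finType) (e : rel T) : Prop :=
  forall v, sparsifiable_vertex e v.

Definition min_degree_ge (T : finType) (e : rel T) (k : nat) : Prop :=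
  forall v, k <= deg e v.

Definition connected_in (T : finType) (e : rel T) (X : {set T}) : Prop :=
  X != set0 /\
  forall x y, x \in X -> y \in X ->
    connect (fun a b => [&& e a b, a \in X & b \in X]) x y.

Definition touch (T : finType) (e : rel T) (X Y : {set T}) : bool :=
  [exists x in X, exists y in Y, e x y].

Definition minor_model (TG TH : finType) (eG : rel TG) (eH : rel TH)
    (X : TH -> {set TG}) : Prop :=
  (forall v, connected_in eG (X v)) /\
  (forall u v, u != v -> [disjoint X u & X v]) /\
  (forall u v, eH u v -> touch eG (X u) (X v)).

Definition induced_minor_model (TG TH : finType) (eG : rel TG) (eH : rel TH)
    (X : TH -> {set TG}) : Prop :=
  minor_model eG eH X /\
  (forall u v, u != v -> ~~ eH u v -> ~~ touch eG (X u) (X v)).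

Definition has_minor (TG TH : finType) (eG : rel TG) (eH : rel TH) : Prop :=
  exists X : TH -> {set TG}, minor_model eG eH X.

Definition has_induced_minor (TG TH : finType) (eG : rel TG) (eH : rel TH) : Prop :=
  exists X : TH -> {set TG}, induced_minor_model eG eH X.

From mathcomp Require Import all_boot.
From Stdlib Require Import Classical.
Set Implicit Arguments. Unset Strict Implicit. Unset Printing Implicit Defensive.

(* Choose a minor model of H in G minimising the number of vertices covered by
   branch sets plus the number of edges of G joining the branch sets of two
   non-adjacent vertices of H; we show that it has no such edge.  Call a vertex
   near s when it lies in the branch set of s or of an H-neighbour of s.  By
   minimality every vertex of the branch set of s has at least two near
   neighbours, since otherwise it could be deleted from its branch set.  If an
   edge xy joins the branch sets of non-adjacent u and v, then y is not near u
   and x is not near v, so x and y both have degree 3 and at most one non-near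
   neighbour.  In a sparsifiable graph this leaves only a triangle
   x y c in which the third neighbour of x has degree at most 2; then c lies in
   a branch set adjacent to both u and v, and moving x into it destroys the edge
   xy without creating a new bad edge. *)

Lemma ex_minimal (A : Type) (P : A -> Prop) (m : A -> nat) :
  (exists x, P x) -> exists x, P x /\ forall y, P y -> m x <= m y.
Proof.
move=> [x0 Px0].
suff: forall n x, m x = n -> P x -> exists x, P x /\ forall y, P y -> m x <= m y.
  exact: (fun H => H _ x0 erefl Px0).
elim/ltn_ind=> n IH x mx Px.
case: (classic (exists2 y, P y & m y < m x)) => [[y Py lt]|none].
  by apply: (IH (m y) _ y erefl Py); rewrite -mx.
exists x; split=> // y Py; rewrite leqNgt; apply/negP => lt.
by apply: none; exists y.
Qed.

Section ConnectedIn.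
Variables (T : finType) (e : rel T).
Hypothesis sym_e : symmetric e.
Implicit Types X Y : {set T}.

Definition induced X : rel T := fun a b => [&& e a b, a \in X & b \in X].

Lemma induced_sym X : symmetric (induced X).
Proof. by move=> a b; rewrite /induced sym_e (andbC (a \in X)). Qed.

Lemma connected_in_root X r :
  r \in X -> (forall q, q \in X -> connect (induced X) q r) -> connected_in e X.
Proof.
move=> rX to_r; split; first by apply/set0Pn; exists r.
move=> a b aX bX; apply: connect_trans (to_r a aX) _.
by rewrite (sym_connect_sym (induced_sym X)) to_r.
Qed.

Lemma connected_in_isolated X p :
  connected_in e X -> p \in X -> (forall n, e p n -> n \notin X) -> X = [set p].
Proof.
move=> [_ connX] pX isolated; apply/setP => q; rewrite inE.
apply/idP/eqP => [qX|->] //.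
have /connectP [[|h s] /= path_pq ->] := connX p q pX qX => //.
by case/andP: path_pq => /and3P [eph _ hX]; move: (isolated h eph); rewrite hX.
Qed.

Lemma connected_in_setU1 X p c :
  connected_in e X -> c \in X -> e p c -> connected_in e (p |: X).
Proof.
move=> [_ connX] cX epc; apply: (@connected_in_root _ c) => [|q]; first by rewrite !inE cX orbT.
rewrite !inE => /predU1P [->|qX]; first by apply: connect1; rewrite /induced epc !inE eqxx cX orbT.
apply: connect_sub (connX q c qX cX) => a b /and3P [eab aX bX].
by apply: connect1; rewrite /induced eab !inE aX bX !orbT.
Qed.

Lemma connected_in_setD1 X p r :
  irreflexive e -> connected_in e X -> p \in X -> r \in X -> e p r ->
  (forall n, e p n -> n \in X -> n = r) -> connected_in e (X :\ p).
Proof.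
move=> irr_e [_ connX] pX rX epr leaf.
have rX' : r \in X :\ p by rewrite !inE rX andbT; apply: contraTneq epr => ->; rewrite irr_e.
apply: (connected_in_root rX') => q qX'.
have /connectP [s] := connX q p (subsetP (subD1set X p) q qX') pX.
elim: s q qX' => [|h s IH] q qX' /= path_qp last_qp; first by rewrite -last_qp !inE eqxx in qX'.
case/andP: path_qp => /and3P [eqh _ hX] path_hp.
have [hp|hp] := eqVneq h p.
  by rewrite hp sym_e in eqh; rewrite (leaf q eqh) ?connect0 //; case/setD1P: qX'.
have hX' : h \in X :\ p by rewrite !inE hp.
by apply: connect_trans (connect1 _) (IH h hX' path_hp last_qp); rewrite /induced eqh qX'.
Qed.

Lemma touchP X Y : reflect (exists x y, [/\ x \in X, y \in Y & e x y]) (touch e X Y).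
Proof.
apply: (iffP exists_inP) => [[x xX /exists_inP [y yY exy]]|[x [y [xX yY exy]]]].
  by exists x, y.
by exists x => //; apply/exists_inP; exists y.
Qed.

Lemma touchC X Y : touch e X Y = touch e Y X.
Proof.
by apply/touchP/touchP => -[x [y [xX yY exy]]]; exists y, x; rewrite sym_e.
Qed.

End ConnectedIn.

Section Sparsifiable.
Variables (TG TH : finType) (eG : rel TG) (eH : rel TH).
Hypotheses (symG : symmetric eG) (irrG : irreflexive eG).
Hypotheses (symH : symmetric eH) (irrH : irreflexive eH).
Hypotheses (spG : sparsifiable eG) (minH : min_degree_ge eH 3).
Implicit Types X : TH -> {set TG}.

Lemma sparsifiable_deg_le3 v : deg eG v <= 3.
Proof. by case: (spG v) => [/leq_trans->|[[->]|[->]]]. Qed.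

Lemma model_branch_eq X q t t' :
  minor_model eG eH X -> q \in X t -> q \in X t' -> t = t'.
Proof.
move=> [_ [disjX _]] qt qt'; apply/eqP; apply: contraT => tt'.
by move: (disjointFr (disjX _ _ tt') qt); rewrite qt'.
Qed.

Definition covered X : {set TG} := [set q | [exists t, q \in X t]].

Definition extra_edges X : {set TG * TG} :=
  [set qq | eG qq.1 qq.2 && [exists t, exists t',
     [&& qq.1 \in X t, qq.2 \in X t', t != t' & ~~ eH t t']]].

Definition potential X := #|covered X| + #|extra_edges X|.

Definition reassign X (x : TG) (o : option TH) (t : TH) : {set TG} :=
  [set q | if q == x then o == Some t else q \in X t].

Lemma mem_reassign_other X x o t q : q != x -> (q \in reassign X x o t) = (q \in X t).
Proof. by move=> qx; rewrite inE (negbTE qx). Qed.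

Lemma mem_reassign_self X x o t : (x \in reassign X x o t) = (o == Some t).
Proof. by rewrite inE eqxx. Qed.

Lemma reassign_model X x u a o :
  minor_model eG eH X -> x \in X u -> a \in X u -> eG x a ->
  (forall n, eG x n -> n \in X u -> n = a) ->
  (forall n t, eG x n -> n \in X t -> eH u t -> o = Some t) ->
  (forall w, o = Some w -> eH u w /\ exists2 c, c \in X w & eG x c) ->
  minor_model eG eH (reassign X x o).
Proof.
move=> modelX xu au exa leaf outer target.
have [connX [disjX touchX]] := modelX.
have ax : a != x by apply: contraTneq exa => ->; rewrite irrG.
have touch_new t : eH u t -> o = Some t -> touch eG (reassign X x o u) (reassign X x o t).
  move=> eut ot; apply/touchP; exists a, x.
  by rewrite mem_reassign_other // mem_reassign_self ot eqxx symG.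
split; [|split].
- move=> t; have [ot|ot] := eqVneq o (Some t).
    have [_ [c ct exc]] := target t ot.
    have -> : reassign X x o t = x |: X t.
      by apply/setP => q; rewrite !inE; case: eqVneq => //; rewrite ot eqxx.
    exact: connected_in_setU1 (connX t) ct exc.
  have [tu|tu] := eqVneq t u.
    have -> : reassign X x o t = X u :\ x.
      by apply/setP => q; rewrite !inE -tu; case: eqVneq => //=; rewrite (negbTE ot).
    exact: connected_in_setD1 (connX u) xu au exa leaf.
  have -> : reassign X x o t = X t.
    apply/setP => q; rewrite inE; case: eqVneq => [->|//]; rewrite (negbTE ot).
    by apply/esym/negP => /(model_branch_eq modelX xu) ut; rewrite ut eqxx in tu.
  exact: connX.
- move=> t1 t2 t12; apply/pred0P => q /=; rewrite !inE.
  apply/negbTE/andP; case: eqVneq => _ [q1 q2].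
    by move: q1 q2 t12 => /eqP -> /eqP [->]; rewrite eqxx.
  by move: t12; rewrite (model_branch_eq modelX q1 q2) eqxx.
- move=> t1 t2 e12; have /touchP [q1 [q2 [q1t q2t eq12]]] := touchX t1 t2 e12.
  have [q1x|q1x] := eqVneq q1 x.
    rewrite q1x in q1t eq12; rewrite -(model_branch_eq modelX xu q1t) in e12 *.
    have q2x : q2 != x by apply: contraTneq eq12 => ->; rewrite irrG.
    exact: touch_new e12 (outer q2 t2 eq12 q2t e12).
  have [q2x|q2x] := eqVneq q2 x.
    rewrite q2x in q2t eq12; rewrite -(model_branch_eq modelX xu q2t) in e12 *.
    by rewrite touchC // touch_new // 1?symH // (outer q1 t1) // 1?symG // symH.
  by apply/touchP; exists q1, q2; rewrite !mem_reassign_other.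
Qed.

Lemma covered_reassign X x o :
  x \in covered X -> covered (reassign X x o) \subset covered X.
Proof.
move=> xX; apply/subsetP => q; rewrite [q \in covered _]inE => /existsP [t].
have [-> _ //|qx] := eqVneq q x.
by rewrite mem_reassign_other // => qt; rewrite inE; apply/existsP; exists t.
Qed.

Lemma extra_edges_reassign X x o :
  (forall w, o = Some w -> forall n t, eG x n -> n \in X t -> (t == w) || eH w t) ->
  extra_edges (reassign X x o) \subset [set qq in extra_edges X | qq.1 != x].
Proof.
move=> no_new; apply/subsetP => -[q1 q2]; rewrite !inE /=.
case/andP => e12 /existsP [t /existsP [t' /and4P [q1t q2t tt' ntt']]].
have [q1x|q1x] := eqVneq q1 x.
  rewrite q1x mem_reassign_self in q1t; rewrite q1x in e12.
  have q2x : q2 != x by apply: contraTneq e12 => ->; rewrite irrG.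
  rewrite mem_reassign_other // in q2t.
  by move: (no_new t (eqP q1t) q2 t' e12 q2t); rewrite eq_sym (negbTE tt') (negbTE ntt').
have [q2x|q2x] := eqVneq q2 x.
  rewrite q2x mem_reassign_self in q2t; rewrite q2x symG in e12.
  rewrite mem_reassign_other // in q1t.
  by move: (no_new t' (eqP q2t) q1 t e12 q1t); rewrite symH (negbTE tt') (negbTE ntt').
rewrite !mem_reassign_other // in q1t q2t.
by rewrite e12 andbT; apply/existsP; exists t; apply/existsP; exists t'; rewrite q1t q2t tt'.
Qed.

Lemma potential_reassign X x o :
  x \in covered X ->
  (forall w, o = Some w -> forall n t, eG x n -> n \in X t -> (t == w) || eH w t) ->
  (o = None \/ exists y, (x, y) \in extra_edges X) ->
  potential (reassign X x o) < potential X.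
Proof.
move=> xX no_new progress.
have sub_cov := covered_reassign o xX.
have sub_extra := extra_edges_reassign no_new.
have sub_extra' : extra_edges (reassign X x o) \subset extra_edges X.
  by apply: subset_trans sub_extra _; apply/subsetP => qq; rewrite inE => /andP [].
rewrite /potential; case: progress => [onone|[y xy]].
  have lt_cov : covered (reassign X x o) \proper covered X.
    apply/properP; split => //; exists x => //.
    by rewrite inE; apply/existsPn => t; rewrite mem_reassign_self onone.
  by rewrite -addSn leq_add // ?proper_card // subset_leq_card.
have lt_extra : extra_edges (reassign X x o) \proper extra_edges X.
  apply/properP; split => //; exists (x, y) => //.
  by apply: contraTN (eqxx x) => /(subsetP sub_extra); rewrite inE => /andP [].
by rewrite -addnS leq_add // ?proper_card // subset_leq_card.
Qed.

Section MinimalModel.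
Variable X : TH -> {set TG}.
Hypothesis modelX : minor_model eG eH X.

Definition near s n : bool := [exists t, (n \in X t) && ((t == s) || eH s t)].

Lemma far_of_nonadjacent s t n : n \in X t -> t != s -> ~~ eH s t -> ~~ near s n.
Proof.
move=> nt ts nst; apply/existsPn => t'; apply/negP => /andP [nt'].
by rewrite -(model_branch_eq modelX nt nt') (negbTE ts) (negbTE nst).
Qed.

Lemma isolated_near_neighbours s p :
  p \in X s -> (forall n, eG p n -> n \notin X s) ->
  2 < #|[set n | eG p n & near s n]|.
Proof.
move=> ps isolated; have [connX [_ touchX]] := modelX.
have Xs : X s = [set p] := connected_in_isolated (connX s) ps isolated.
have outer t : eH s t -> exists n, [/\ eG p n, n \in X t & near s n].
  move=> est; have /touchP [q [n [qs nt eqn]]] := touchX s t est.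
  exists n; split => //; last by apply/existsP; exists t; rewrite nt est orbT.
  by move: qs eqn; rewrite Xs inE => /eqP ->.
have distinct n n' t t' : n \in X t -> n' \in X t' -> t != t' -> n != n'.
  move=> nt nt'; apply: contraNneq => nn'; rewrite nn' in nt.
  by rewrite (model_branch_eq modelX nt nt').
have /card_gt2P [t1 [t2 [t3 [[h1 h2 h3] [d12 d23 d31]]]]] := minH s.
rewrite !inE in h1 h2 h3.
have [n1 [e1 n1t n1s]] := outer t1 h1.
have [n2 [e2 n2t n2s]] := outer t2 h2.
have [n3 [e3 n3t n3s]] := outer t3 h3.
apply/card_gt2P; exists n1, n2, n3; rewrite !inE e1 e2 e3 n1s n2s n3s.
split; first by split.
by split; [apply: distinct n1t n2t d12 | apply: distinct n2t n3t d23 | apply: distinct n3t n1t d31].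
Qed.

Lemma own_branch_neighbour s p a c :
  p \in X s -> [set n | eG p n & near s n] \subset [set a; c] ->
  exists2 n, eG p n & n \in X s.
Proof.
move=> ps sub; apply/exists_inP; apply: contraT => /exists_inPn isolated.
have := isolated_near_neighbours ps isolated.
by rewrite ltnNge (leq_trans (subset_leq_card sub)) // cards2; case: (a != c).
Qed.

Hypothesis minX : forall X', minor_model eG eH X' -> potential X <= potential X'.

Lemma leaf_outer_neighbour s p r :
  p \in X s -> r \in X s -> eG p r -> (forall n, eG p n -> n \in X s -> n = r) ->
  exists n t, [/\ eG p n, n \in X t & eH s t].
Proof.
move=> ps rs epr leaf.
case: (boolP [exists n, exists t, [&& eG p n, n \in X t & eH s t]]).
  by move=> /existsP [n /existsP [t /and3P [epn nt est]]]; exists n, t.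
move=> /existsPn none; have pX : p \in covered X by rewrite inE; apply/existsP; exists s.
have modelX' : minor_model eG eH (reassign X p None).
  apply: (reassign_model modelX ps rs epr leaf) => // n t epn nt est.
  by move/existsPn: (none n) => /(_ t); rewrite epn nt est.
by have := minX modelX'; rewrite leqNgt potential_reassign //; left.
Qed.

Lemma near_neighbours s p : p \in X s -> 1 < #|[set n | eG p n & near s n]|.
Proof.
move=> ps; have near_own n : n \in X s -> near s n.
  by move=> ns; apply/existsP; exists s; rewrite ns eqxx.
case: (boolP [exists n, eG p n && (n \in X s)]); last first.
  move=> /existsPn isolated; apply/ltnW/(isolated_near_neighbours ps) => n epn.
  by move: (isolated n); rewrite epn.
move=> /existsP [r /andP [epr rs]].
case: (boolP [exists n, [&& eG p n, n \in X s & n != r]]).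
  move=> /existsP [q /and3P [epq qs qr]].
  by apply/card_gt1P; exists q, r; rewrite !inE epq epr !near_own.
move=> /existsPn not2; have leaf n : eG p n -> n \in X s -> n = r.
  by move=> epn ns; apply/eqP; move: (not2 n); rewrite epn ns negbK.
have [n [t [epn nt est]]] := leaf_outer_neighbour ps rs epr leaf.
apply/card_gt1P; exists n, r; rewrite !inE epn epr (near_own r rs); split => //.
  by apply/existsP; exists t; rewrite nt est orbT.
by apply: contraTneq est => nr; rewrite nr in nt; rewrite (model_branch_eq modelX nt rs) irrH.
Qed.

Lemma far_neighbours s p :
  p \in X s -> #|[set n | eG p n & ~~ near s n]| + 2 <= deg eG p.
Proof.
move=> ps; rewrite /deg -(cardsID [set n | near s n] (nbhd eG p)) addnC.
apply: leq_add; last by apply/eq_leq/eq_card => n; rewrite /nbhd !inE andbC.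
by apply: leq_trans (near_neighbours ps) (eq_leq (eq_card _)) => n; rewrite /nbhd !inE.
Qed.

Lemma far_neighbour_deg s p q : p \in X s -> eG p q -> ~~ near s q -> 2 < deg eG p.
Proof.
move=> ps epq far_q; apply: leq_trans (far_neighbours ps).
by rewrite -[3]/(1 + 2) leq_add2r card_gt0; apply/set0Pn; exists q; rewrite !inE epq.
Qed.

Lemma far_neighbour_unique s p q q' :
  p \in X s -> eG p q -> eG p q' -> ~~ near s q -> ~~ near s q' -> q = q'.
Proof.
move=> ps epq epq' far_q far_q'; apply/eqP; apply: contraT => qq'.
have two : 1 < #|[set n | eG p n & ~~ near s n]|.
  by apply/card_gt1P; exists q, q'; rewrite !inE epq epq' far_q far_q'.
have := leq_trans (far_neighbours ps) (sparsifiable_deg_le3 p).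
by rewrite -[3]/(1 + 2) leq_add2r leqNgt two.
Qed.

Lemma triangle_move u v w x y a c :
  x \in X u -> a \in X u -> y \in X v -> c \in X w -> nbhd eG x = [set a; y; c] ->
  eH u w -> eH v w -> u != v -> ~~ eH u v -> False.
Proof.
move=> xu au yv cw Nx euw evw uv nuv.
have adj n : n \in [set a; y; c] -> eG x n by rewrite -Nx inE.
have [exa exy exc] : [/\ eG x a, eG x y & eG x c] by split; apply: adj; rewrite !inE eqxx ?orbT.
have nbr n : eG x n -> [\/ n = a, n = y | n = c].
  move=> exn; have : n \in nbhd eG x by rewrite inE.
  by rewrite Nx !inE -orbA => /or3P [] /eqP; [constructor 1|constructor 2|constructor 3].
have wu : w != u by apply: contraTneq euw => ->; rewrite irrH.
have leaf n : eG x n -> n \in X u -> n = a.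
  move=> /nbr [-> //|->|->] nu.
    by rewrite (model_branch_eq modelX nu yv) eqxx in uv.
  by rewrite (model_branch_eq modelX nu cw) eqxx in wu.
have outer n t : eG x n -> n \in X t -> eH u t -> Some w = Some t.
  move=> /nbr [->|->|->] nt.
  - by rewrite -(model_branch_eq modelX au nt) irrH.
  - by rewrite -(model_branch_eq modelX yv nt) (negbTE nuv).
  - by rewrite -(model_branch_eq modelX cw nt).
have no_new w' : Some w = Some w' -> forall n t, eG x n -> n \in X t -> (t == w') || eH w' t.
  move=> [<-] n t /nbr [->|->|->] nt.
  - by rewrite -(model_branch_eq modelX au nt) symH euw orbT.
  - by rewrite -(model_branch_eq modelX yv nt) symH evw orbT.
  - by rewrite -(model_branch_eq modelX cw nt) eqxx.
have modelX' : minor_model eG eH (reassign X x (Some w)).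
  by apply: (reassign_model modelX xu au exa leaf outer) => _ [<-]; split; last exists c.
have := minX modelX'; rewrite leqNgt potential_reassign //.
  by rewrite inE; apply/existsP; exists u.
right; exists y; rewrite inE exy /=; apply/existsP; exists u; apply/existsP; exists v.
by rewrite xu yv uv.
Qed.

Lemma extra_edge_triangle u v x y a c :
  x \in X u -> y \in X v -> u != v -> ~~ eH u v ->
  nbhd eG x = [set a; y; c] -> eG y c -> False.
Proof.
move=> xu yv uv nuv Nx eyc.
have far_y : ~~ near u y by apply: far_of_nonadjacent yv _ nuv; rewrite eq_sym.
have far_x : ~~ near v x by apply: far_of_nonadjacent xu uv _; rewrite symH.
have adj n : n \in [set a; y; c] -> eG x n by rewrite -Nx inE.
have [exy exc] : eG x y /\ eG x c by split; apply: adj; rewrite !inE eqxx ?orbT.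
have near_uc : near u c.
  apply: contraT => far_c; have cy := far_neighbour_unique xu exc exy far_c far_y.
  by rewrite cy irrG in eyc.
have near_vc : near v c.
  apply: contraT => far_c; have cx := far_neighbour_unique yv eyc _ far_c far_x.
  by rewrite cx ?irrG // symG in exc.
have /existsP [w /andP [cw wu]] := near_uc.
have /existsP [w' /andP [cw' w'v]] := near_vc.
rewrite -(model_branch_eq modelX cw cw') in w'v.
have euw : eH u w.
  by case/orP: wu => [/eqP wu|//]; rewrite wu (negbTE uv) symH (negbTE nuv) in w'v.
have evw : eH v w.
  by case/orP: w'v => [/eqP wv|//]; rewrite wv eq_sym (negbTE uv) (negbTE nuv) in wu.
have [n exn nu] : exists2 n, eG x n & n \in X u.
  apply: (own_branch_neighbour (a := a) (c := c) xu).
  apply/subsetP => n; rewrite !inE => /andP [exn near_n].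
  have : n \in nbhd eG x by rewrite inE.
  rewrite Nx !inE -orbA => /or3P [-> // | /eqP ny | -> //]; last by rewrite orbT.
  by rewrite ny (negbTE far_y) in near_n.
have : n \in nbhd eG x by rewrite inE.
rewrite Nx !inE -orbA => /or3P [/eqP na | /eqP ny | /eqP nc].
- by rewrite na in nu; apply: triangle_move xu nu yv cw Nx euw evw uv nuv.
- by rewrite ny in nu; rewrite (model_branch_eq modelX nu yv) eqxx in uv.
- by rewrite nc in nu; rewrite (model_branch_eq modelX nu cw) irrH in euw.
Qed.

Lemma minimal_model_induced : induced_minor_model eG eH X.
Proof.
split=> // u v uv nuv; apply/negP => /touchP [x [y [xu yv exy]]].
have far_y : ~~ near u y by apply: far_of_nonadjacent yv _ nuv; rewrite eq_sym.
have far_x : ~~ near v x by apply: far_of_nonadjacent xu uv _; rewrite symH.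
have eyx : eG y x by rewrite symG.
have deg_x := far_neighbour_deg xu exy far_y.
have deg_y := far_neighbour_deg yv eyx far_x.
case: (spG x) => [|[[_ small_nbrs]|[_ [a [b [z [Nx _ _ _ [small_a ebz]]]]]]]].
- by rewrite leqNgt deg_x.
- by move: deg_y; rewrite ltnNge small_nbrs.
have ya : y != a by apply: contraTneq small_a => <-; rewrite -ltnNge.
have : y \in nbhd eG x by rewrite inE.
rewrite Nx !inE (negbTE ya) /= => /orP [/eqP yb|/eqP yz].
  by rewrite -yb in Nx ebz; apply: extra_edge_triangle xu yv uv nuv Nx ebz.
rewrite -yz in Nx ebz; rewrite symG in ebz.
apply: extra_edge_triangle xu yv uv nuv _ ebz.
by rewrite Nx; apply/setP => n; rewrite !inE orbAC.
Qed.

End MinimalModel.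
End Sparsifiable.

Theorem lemma2 (TG TH : finType) (eG : rel TG) (eH : rel TH) :
  simple_graph eG -> simple_graph eH ->
  sparsifiable eG -> min_degree_ge eH 3 ->
  has_minor eG eH -> has_induced_minor eG eH.
Proof.
move=> [symG irrG] [symH irrH] spG minH [X0 model0].
have [X [modelX minX]] := ex_minimal (potential eG eH) (ex_intro _ X0 model0).
by exists X; apply: minimal_model_induced minX.
Qed.
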